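(* For all integers $m\geq 3$ and $n\geq 1$, the prism graph $C[m]\times P[n+1]$ is antimagic.
   Context: All graphs are finite, undirected and simple. $C[m]$ denotes the cycle on $m$ vertices and $P[k]$ the path on $k$ vertices. The Cartesian product $G_1\times G_2$ of graphs $G_1=(V_1,E_1)$ and $G_2=(V_2,E_2)$ has vertex set $V_1\times V_2$, with $(u_1,u_2)$ adjacent to $(v_1,v_2)$ iff either $u_1=v_1$ and $u_2v_2\in E_2$, or $u_2=v_2$ and $u_1v_1\in E_1$. An antimagic labeling of a graph with $m'$ edges is a bijection $f$ from its edge set to $\{1,\ldots,m'\}$ such that the vertex sums $f^+(v)=\sum_{e\ni v} f(e)$ (sum over edges incident with $v$) are pairwise distinct over all vertices $v$. A graph is antimagic if it admits an antimagic labeling. *)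

From mathcomp Require Import all_boot.
Set Implicit Arguments. Unset Strict Implicit. Unset Printing Implicit Defensive.

(* A simple graph on a finite vertex type T is given by a symmetric,
   irreflexive adjacency relation adj. *)

Definition edges (T : finType) (adj : rel T) : {set {set T}} :=
  [set e : {set T} | [exists x, exists y, adj x y && (e == [set x; y])]].

Definition vsum (T : finType) (adj : rel T) (f : {set T} -> nat) (v : T) : nat :=
  \sum_(e in edges adj | v \in e) f e.

(* f is a bijection from the edge set onto {1, ..., |E|}:
   injective on E with values in {1..|E|} (hence bijective, E being finite). *)
Definition edge_labeling (T : finType) (adj : rel T) (f : {set T} -> nat) : Prop :=
  {in edges adj &, injective f} /\
  (forall e, e \in edges adj -> 1 <= f e <= #|edges adj|).

Definition antimagic_labeling (T : finType) (adj : rel T) (f : {set T} -> nat) : Prop :=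
  edge_labeling adj f /\ injective (vsum adj f).

Definition antimagic (T : finType) (adj : rel T) : Prop :=
  exists f, antimagic_labeling adj f.

(* Cycle C[m] on vertices 'I_m (a simple cycle when m >= 3). *)
Definition cycle_adj (m : nat) : rel 'I_m :=
  fun i j => (val j == i.+1 %% m) || (val i == j.+1 %% m).

Definition path_adj (k : nat) : rel 'I_k :=
  fun i j => (val j == i.+1) || (val i == j.+1).

Definition cart_adj (T1 T2 : finType) (a1 : rel T1) (a2 : rel T2) : rel (T1 * T2) :=
  fun u v => ((u.1 == v.1) && a2 u.2 v.2) || ((u.2 == v.2) && a1 u.1 v.1).

Arguments antimagic {T} adj.
Definition prism_adj (m k : nat) : rel ('I_m * 'I_k) :=
  cart_adj (@cycle_adj m) (@path_adj k).
Arguments prism_adj : clear implicits.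

From mathcomp Require Import all_boot zify.
Set Implicit Arguments. Unset Strict Implicit. Unset Printing Implicit Defensive.

(* Split the labels 1..(2n+1)m into 2n+1 blocks of m consecutive labels and
   give each layer of the prism -- the cycle at one level of the path, or the
   m vertical edges between two consecutive levels -- a whole block.  A vertex
   sum then reads m * K + O, where K adds up the block indices of the layers
   at the level of the vertex and 0 < O <= 4m collects the offsets inside the
   blocks.  The blocks are placed so that the weights K of distinct levels
   differ by at least 4, which separates the levels.  Inside a level, the
   cyclic offsets follow the zigzag 0, 2, 4, ..., 5, 3, 1 and the vertical
   offsets rank the columns by the sum of their two horizontal offsets, so O
   increases strictly along that ranking. *)

Lemma set2_eq (T : finType) (a b c d : T) :
  [set a; b] = [set c; d] -> (a = c /\ b = d) \/ (a = d /\ b = c).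
Proof.
move=> e.
have : a \in [set c; d] by rewrite -e set21.
have : b \in [set c; d] by rewrite -e set22.
have : c \in [set a; b] by rewrite e set21.
have : d \in [set a; b] by rewrite e set22.
by rewrite !inE => /pred2P [] ? /pred2P [] ? /pred2P [] ? /pred2P [] ?; subst; auto.
Qed.

Section ArcParametrization.
Variables (T I : finType) (adj : rel T) (tail head : I -> T).
Hypothesis adj_arc : forall x, adj (tail x) (head x).
Hypothesis arc_of_adj : forall u v, adj u v ->
  exists x, (tail x, head x) = (u, v) \/ (tail x, head x) = (v, u).
Hypothesis arc_inj : forall x y, tail x = tail y -> head x = head y -> x = y.
Hypothesis no_reversed_arcs : forall x y, tail x = head y -> head x <> tail y.

Definition arc_edge x := [set tail x; head x].

Lemma tail_neq_head x : tail x != head x.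
Proof. by apply/eqP => e; apply: (no_reversed_arcs e (esym e)). Qed.

Lemma arc_edge_inj : injective arc_edge.
Proof. by move=> x y /set2_eq [[]|[/no_reversed_arcs]]; [apply: arc_inj|]. Qed.

Lemma edges_arcs : edges adj = arc_edge @: [set: I].
Proof.
apply/setP => e; rewrite inE; apply/existsP/imsetP.
- case=> u /existsP [v /andP [/arc_of_adj [x [] [<- <-]] /eqP ->]].
    by exists x.
  by exists x; rewrite // /arc_edge setUC.
- case=> x _ ->; exists (tail x); apply/existsP; exists (head x).
  by rewrite adj_arc eqxx.
Qed.

Lemma card_edges_arcs : #|edges adj| = #|I|.
Proof. by rewrite edges_arcs card_imset ?cardsT //; apply: arc_edge_inj. Qed.

Definition arc_label (L : I -> nat) (e : {set T}) :=
  if [pick x | arc_edge x == e] is Some x then L x else 0.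

Lemma arc_label_edge L x : arc_label L (arc_edge x) = L x.
Proof.
rewrite /arc_label; case: pickP => [y /eqP /arc_edge_inj -> // | none].
by have := none x; rewrite eqxx.
Qed.

Lemma arc_edge_labeling L : injective L -> (forall x, 0 < L x <= #|I|) ->
  edge_labeling adj (arc_label L).
Proof.
move=> L_inj L_range; split => [e e' | e]; rewrite ?card_edges_arcs edges_arcs.
  by move=> /imsetP [x _ ->] /imsetP [y _ ->]; rewrite !arc_label_edge => /L_inj ->.
by move=> /imsetP [x _ ->]; rewrite arc_label_edge.
Qed.

Lemma vsum_arc_label L v : vsum adj (arc_label L) v =
  \sum_(x | tail x == v) L x + \sum_(x | head x == v) L x.
Proof.
rewrite /vsum edges_arcs big_imset_cond /=; last by move=> x y _ _; apply: arc_edge_inj.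
rewrite (bigID (fun x => tail x == v)) /=; congr (_ + _); apply: eq_big => x;
  rewrite ?arc_label_edge // in_setT !inE.
- by case: (tail x =P v) => [-> | _]; rewrite ?eqxx ?andbF.
- case: (tail x =P v) => [<- | /eqP ne] /=.
    by rewrite andbF eq_sym (negbTE (tail_neq_head x)).
  by rewrite andbT eq_sym (negbTE ne) eq_sym.
Qed.

End ArcParametrization.

Section BlockLabels.
Variable m : nat.

Definition block_label b o := b * m + o.+1.

Lemma block_label_inj b b' o o' : o < m -> o' < m ->
  block_label b o = block_label b' o' -> b = b' /\ o = o'.
Proof.
move=> lt_om lt_o'm /eqP; rewrite /block_label !addnS eqSS => /eqP e.
by have := edivn_eq b lt_om; rewrite e edivn_eq // => -[-> ->].
Qed.

Lemma block_label_range k b o : b < k -> o < m -> 0 < block_label b o <= k * m.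
Proof.
move=> lt_bk lt_om; rewrite /block_label addnS ltnS leq0n /=.
by have := leq_mul lt_bk (leqnn m); rewrite mulSn; lia.
Qed.

End BlockLabels.

Lemma ltn_mul_window m k x y r s :
  x + k <= y -> s <= k * m -> 0 < r -> m * x + s < m * y + r.
Proof. by move=> le_xy le_s lt0r; have := leq_mul (leqnn m) le_xy; lia. Qed.

Section Offsets.
Variable m : nat.

Definition cyc_pred i := if i == 0 then m.-1 else i.-1.

Definition hoffset i := if 2 * i < m then 2 * i else 2 * (m - i) - 1.

(* voffset i is the rank of hoffset i + hoffset (cyc_pred i) among these m
   (pairwise distinct) sums. *)
Definition voffset i :=
  if i == 0 then 0 else if 2 * i < m then 2 * i - 1
  else if 2 * i < m + 2 then m - 1 else 2 * (m - i).

Lemma cyc_pred_lt i : i < m -> cyc_pred i < m.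
Proof. rewrite /cyc_pred; case: ifP; lia. Qed.

Lemma hoffset_lt i : i < m -> hoffset i < m.
Proof. rewrite /hoffset; case: ifP; lia. Qed.

Lemma voffset_lt i : i < m -> voffset i < m.
Proof. rewrite /voffset; repeat case: ifP; lia. Qed.

Lemma hoffset_inj i i' : i < m -> i' < m -> hoffset i = hoffset i' -> i = i'.
Proof. rewrite /hoffset; repeat case: ifP; lia. Qed.

Lemma voffset_inj i i' : i < m -> i' < m -> voffset i = voffset i' -> i = i'.
Proof. rewrite /voffset; repeat case: ifP; lia. Qed.

Lemma voffset_mean i : i < m ->
  2 * voffset i <= hoffset i + hoffset (cyc_pred i) + 1 <= 2 * voffset i + 2.
Proof. rewrite /voffset /hoffset /cyc_pred; repeat case: ifP; lia. Qed.

End Offsets.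

Section Blocks.
Variable n : nat.

(* hblock and vblock enumerate the even and the odd numbers of [0, 2n]:
   each climbs in steps of 4 up to the middle of the path and comes back down
   in the other residue class mod 4. *)
Definition hblock j := if 2 * j <= n then 4 * j else 4 * (n - j) + 2.
Definition vblock g := if 2 * g < n then 4 * g + 1 else 4 * (n - g) - 1.

Lemma hblock_lt j : j <= n -> hblock j < 2 * n + 1.
Proof. rewrite /hblock; case: ifP; lia. Qed.

Lemma vblock_lt g : g < n -> vblock g < 2 * n + 1.
Proof. rewrite /vblock; case: ifP; lia. Qed.

Lemma hblock_inj j j' : j <= n -> j' <= n -> hblock j = hblock j' -> j = j'.
Proof. rewrite /hblock; repeat case: ifP; lia. Qed.

Lemma vblock_inj g g' : g < n -> g' < n -> vblock g = vblock g' -> g = g'.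
Proof. rewrite /vblock; repeat case: ifP; lia. Qed.

Lemma hblock_neq_vblock j g : g < n -> hblock j <> vblock g.
Proof. rewrite /hblock /vblock; repeat case: ifP; lia. Qed.

Definition layer_weight j :=
  2 * hblock j + (if j < n then vblock j else 0) + (if 0 < j then vblock j.-1 else 0).

Lemma layer_weight_gap j j' : j <= n -> j' <= n -> j != j' ->
  layer_weight j + 4 <= layer_weight j' \/ layer_weight j' + 4 <= layer_weight j.
Proof. rewrite /layer_weight /hblock /vblock; repeat case: ifP; lia. Qed.

End Blocks.

Section Labels.
Variables m n : nat.

Definition hlabel i j := block_label m (hblock n j) (hoffset m i).
Definition vlabel i g := block_label m (vblock n g) (voffset m i).

Lemma hlabel_inj i i' j j' : i < m -> i' < m -> j <= n -> j' <= n ->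
  hlabel i j = hlabel i' j' -> i = i' /\ j = j'.
Proof.
move=> lt_im lt_i'm le_jn le_j'n.
move=> /(block_label_inj (hoffset_lt lt_im) (hoffset_lt lt_i'm)) [eb eo].
by split; [apply: hoffset_inj eo | apply: hblock_inj eb].
Qed.

Lemma vlabel_inj i i' g g' : i < m -> i' < m -> g < n -> g' < n ->
  vlabel i g = vlabel i' g' -> i = i' /\ g = g'.
Proof.
move=> lt_im lt_i'm lt_gn lt_g'n.
move=> /(block_label_inj (voffset_lt lt_im) (voffset_lt lt_i'm)) [eb eo].
by split; [apply: voffset_inj eo | apply: vblock_inj eb].
Qed.

Lemma hlabel_neq_vlabel i i' j g : i < m -> i' < m -> g < n ->
  hlabel i j <> vlabel i' g.
Proof.
move=> lt_im lt_i'm lt_gn.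
move=> /(block_label_inj (hoffset_lt lt_im) (voffset_lt lt_i'm)) [eb _].
exact: hblock_neq_vblock eb.
Qed.

Lemma hlabel_range i j : i < m -> j <= n -> 0 < hlabel i j <= (2 * n + 1) * m.
Proof.
by move=> lt_im le_jn; apply: block_label_range (hblock_lt le_jn) (hoffset_lt lt_im).
Qed.

Lemma vlabel_range i g : i < m -> g < n -> 0 < vlabel i g <= (2 * n + 1) * m.
Proof.
by move=> lt_im lt_gn; apply: block_label_range (vblock_lt lt_gn) (voffset_lt lt_im).
Qed.

End Labels.

Section VertexSums.
Variables m n : nat.
Hypothesis n_gt0 : 0 < n.

Local Notation hlabel := (hlabel m n).
Local Notation vlabel := (vlabel m n).

Definition vertex_sum i j :=
  hlabel i j + hlabel (cyc_pred m i) j +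
  (if j < n then vlabel i j else 0) + (if 0 < j then vlabel i j.-1 else 0).

Definition offset_sum i j :=
  hoffset m i + hoffset m (cyc_pred m i) + 2 +
  (if j < n then (voffset m i).+1 else 0) + (if 0 < j then (voffset m i).+1 else 0).

Lemma vertex_sumE i j : vertex_sum i j = m * layer_weight n j + offset_sum i j.
Proof.
rewrite /vertex_sum /hlabel /vlabel /block_label /layer_weight /offset_sum.
by case: ifP => _; case: ifP => _; rewrite !mulnDr !(mulnC m); lia.
Qed.

Lemma offset_sum_le i j : i < m -> offset_sum i j <= 4 * m.
Proof.
move=> lt_im; have := hoffset_lt lt_im; have := voffset_lt lt_im.
have := hoffset_lt (cyc_pred_lt lt_im).
by rewrite /offset_sum; case: ifP => _; case: ifP => _; lia.
Qed.

(* offset_sum i j = s + 2 + c * (voffset i + 1) with c >= 1 (as n > 0) and s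
   within 1 of 2 * voffset i by voffset_mean, so it increases strictly with
   voffset i. *)
Lemma offset_sum_inj i i' j : i < m -> i' < m -> j <= n ->
  offset_sum i j = offset_sum i' j -> i = i'.
Proof.
move=> lt_im lt_i'm le_jn e; apply: (@voffset_inj m) => //.
have := voffset_mean lt_im; have := voffset_mean lt_i'm.
by move: e; rewrite /offset_sum; case: ifP => ?; case: ifP => ?; lia.
Qed.

Lemma vertex_sum_inj i i' j j' : i < m -> i' < m -> j <= n -> j' <= n ->
  vertex_sum i j = vertex_sum i' j' -> i = i' /\ j = j'.
Proof.
move=> lt_im lt_i'm le_jn le_j'n; rewrite !vertex_sumE.
have [<- | ne_jj'] := eqVneq j j'.
  by move=> e; split => //; apply: offset_sum_inj le_jn _; lia.
have sep k l x y : layer_weight n k + 4 <= layer_weight n l -> x < m ->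
    m * layer_weight n k + offset_sum x k < m * layer_weight n l + offset_sum y l.
  move=> gap lt_xm; apply: ltn_mul_window gap (offset_sum_le _ lt_xm) _.
  by rewrite /offset_sum; lia.
case: (layer_weight_gap le_jn le_j'n ne_jj') => /sep lt_sums.
- by have := lt_sums i i' lt_im; lia.
- by have := lt_sums i' i lt_i'm; lia.
Qed.

End VertexSums.

Lemma sum_column m n (F : nat -> nat -> nat) (i : 'I_m) k :
  \sum_(g : 'I_m * 'I_n | (g.1 == i) && (g.2 == k :> nat)) F g.1 g.2 =
  if k < n then F i k else 0.
Proof.
case: ltnP => [lt_kn | le_nk].
  by rewrite (big_pred1 (i, Ordinal lt_kn)) // => -[g1 g2]; rewrite xpair_eqE.
rewrite big_pred0 // => -[g1 g2] /=.
by rewrite (ltn_eqF (leq_trans (ltn_ord g2) le_nk)) andbF.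
Qed.

Lemma lift0_eq n (g : 'I_n) (j : 'I_n.+1) : (lift ord0 g == j) = (g.+1 == j).
Proof. by rewrite -lift0 val_eqE. Qed.

Section CyclicSuccessor.
Variable m : nat.

Lemma cycle_adjE (i j : 'I_m) : cycle_adj i j = (j == ordS i) || (i == ordS j).
Proof. by []. Qed.

Lemma val_ordS (i : 'I_m) : val (ordS i) = if i.+1 == m then 0 else i.+1.
Proof.
rewrite /=; case: eqP => [-> | ne]; first exact: modnn.
by rewrite modn_small //; have := ltn_ord i; lia.
Qed.

Lemma val_ord_pred (i : 'I_m) : val (ord_pred i) = cyc_pred m i.
Proof.
case: i => -[|i] lt_im /=; first by rewrite modn_small //; lia.
by rewrite modnDr modn_small // ltnW.
Qed.

Lemma ordS2_neq (i : 'I_m) : 2 < m -> ordS (ordS i) != i.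
Proof.
move=> m_gt2; apply/eqP => /(congr1 val); move: (ltn_ord i).
by rewrite !val_ordS; case: (i.+1 =P m) => ? /=; case: eqP; lia.
Qed.

End CyclicSuccessor.

Section PrismArcs.
Variables m n : nat.
Hypothesis m_gt2 : 2 < m.

Local Notation vertex := ('I_m * 'I_n.+1)%type.
Local Notation arc := ('I_m * 'I_n.+1 + 'I_m * 'I_n)%type.

Definition prism_tail (x : arc) : vertex :=
  match x with inl h => h | inr g => (g.1, widen_ord (leqnSn n) g.2) end.
Definition prism_head (x : arc) : vertex :=
  match x with inl h => (ordS h.1, h.2) | inr g => (g.1, lift ord0 g.2) end.

Lemma prism_adj_arc x : prism_adj m n.+1 (prism_tail x) (prism_head x).
Proof.
rewrite /prism_adj /cart_adj; case: x => [[i j] | [i g]] /=.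
  by rewrite cycle_adjE !eqxx orbT.
by rewrite eqxx /path_adj lift0 eqxx.
Qed.

Lemma prism_arc_of_adj u v : prism_adj m n.+1 u v ->
  exists x, (prism_tail x, prism_head x) = (u, v) \/
            (prism_tail x, prism_head x) = (v, u).
Proof.
have vertical (w w' : vertex) : w.1 = w'.1 -> val w'.2 = w.2.+1 ->
    exists x, (prism_tail x, prism_head x) = (w, w').
  case: w w' => [i j] [i' j'] /= <- e.
  have lt_jn : j < n by rewrite -ltnS -e.
  exists (inr (i, Ordinal lt_jn)) => /=.
  by congr (_, _); congr (_, _); apply: val_inj; rewrite /= ?lift0 ?e.
have horizontal (w w' : vertex) : w.2 = w'.2 -> w'.1 = ordS w.1 ->
    exists x, (prism_tail x, prism_head x) = (w, w').
  by case: w w' => [i j] [i' j'] /= -> ->; exists (inl (i, j')).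
rewrite /prism_adj /cart_adj cycle_adjE /path_adj.
case/orP => /andP [/eqP e /orP [] /eqP e'].
- by have [x] := vertical u v e e'; exists x; left.
- by have [x] := vertical v u (esym e) e'; exists x; right.
- by have [x] := horizontal u v e e'; exists x; left.
- by have [x] := horizontal v u (esym e) e'; exists x; right.
Qed.

Lemma prism_head_level x :
  (prism_head x).2 = (prism_tail x).2 + (if x is inr _ then 1 else 0) :> nat.
Proof. by case: x => [h | g]; [rewrite addn0 | rewrite lift0 addn1]. Qed.

Lemma prism_arc_inj x y :
  prism_tail x = prism_tail y -> prism_head x = prism_head y -> x = y.
Proof.
move=> et eh; have := prism_head_level x; rewrite eh et prism_head_level => /addnI.
case: x y et {eh} => [[i j] | [i g]] [[i' j'] | [i' g']] //= [-> e] _.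
  by rewrite e.
by rewrite (ord_inj e).
Qed.

Lemma prism_no_reversed_arcs x y :
  prism_tail x = prism_head y -> prism_head x <> prism_tail y.
Proof.
move=> e e'; have := prism_head_level x; rewrite e e' prism_head_level.
case: x y e e' => [[i j] | [i g]] [[i' j'] | [i' g']] /=; try lia.
by case=> -> _ [/eqP]; rewrite (negbTE (ordS2_neq _ m_gt2)).
Qed.

Definition prism_label (x : arc) : nat :=
  match x with inl h => hlabel m n h.1 h.2 | inr g => vlabel m n g.1 g.2 end.

Lemma prism_label_inj : injective prism_label.
Proof.
case=> [[i j] | [i g]] [[i' j'] | [i' g']] /=.
- move/(hlabel_inj (ltn_ord i) (ltn_ord i') (leq_ord j) (leq_ord j')).
  by case=> /ord_inj -> /ord_inj ->.
- by move/(hlabel_neq_vlabel (ltn_ord i) (ltn_ord i') (ltn_ord g')).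
- by move/esym/(hlabel_neq_vlabel (ltn_ord i') (ltn_ord i) (ltn_ord g)).
- move/(vlabel_inj (ltn_ord i) (ltn_ord i') (ltn_ord g) (ltn_ord g')).
  by case=> /ord_inj -> /ord_inj ->.
Qed.

Lemma prism_label_range x : 0 < prism_label x <= #|{: arc}|.
Proof.
rewrite card_sum !card_prod !card_ord.
have -> : m * n.+1 + m * n = (2 * n + 1) * m by lia.
case: x => [[i j] | [i g]].
  exact: hlabel_range (ltn_ord i) (leq_ord j).
exact: vlabel_range (ltn_ord i) (ltn_ord g).
Qed.

Lemma sum_out_arcs v : \sum_(x | prism_tail x == v) prism_label x =
  hlabel m n v.1 v.2 + (if v.2 < n then vlabel m n v.1 v.2 else 0).
Proof.
case: v => i j; rewrite big_sumType /= big_pred1_eq; congr (_ + _).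
rewrite (eq_bigl (fun g : 'I_m * 'I_n => (g.1 == i) && (g.2 == j :> nat))).
  exact: sum_column.
by move=> [i' g]; rewrite /= xpair_eqE.
Qed.

Lemma sum_in_arcs v : \sum_(x | prism_head x == v) prism_label x =
  hlabel m n (cyc_pred m v.1) v.2 + (if 0 < v.2 then vlabel m n v.1 v.2.-1 else 0).
Proof.
case: v => i j; rewrite big_sumType /=; congr (_ + _).
  rewrite (big_pred1 (ord_pred i, j)) -?val_ord_pred // => -[i' j'].
  by rewrite /= !xpair_eqE (can2_eq (@ordSK m) (@ord_predK m)).
case: j => -[|k] lt_k /=.
  by rewrite big_pred0 // => -[i' g]; rewrite /= xpair_eqE lift0_eq andbF.
rewrite (eq_bigl (fun g : 'I_m * 'I_n => (g.1 == i) && (g.2 == k :> nat))).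
  by rewrite sum_column -ltnS lt_k.
by move=> [i' g]; rewrite /= xpair_eqE lift0_eq.
Qed.

Definition prism_labeling := arc_label prism_tail prism_head prism_label.

Lemma prism_edge_labeling : edge_labeling (prism_adj m n.+1) prism_labeling.
Proof.
apply: (arc_edge_labeling prism_adj_arc prism_arc_of_adj prism_arc_inj
  prism_no_reversed_arcs).
  exact: prism_label_inj.
exact: prism_label_range.
Qed.

Lemma vsum_prism_labeling v :
  vsum (prism_adj m n.+1) prism_labeling v = vertex_sum m n v.1 v.2.
Proof.
rewrite (vsum_arc_label prism_adj_arc prism_arc_of_adj prism_arc_inj
  prism_no_reversed_arcs).
by rewrite sum_out_arcs sum_in_arcs /vertex_sum addnACA !addnA.
Qed.

End PrismArcs.

Theorem theorem1p2 (m n : nat) :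
  3 <= m -> 1 <= n -> antimagic (prism_adj m n.+1).
Proof.
move=> m_gt2 n_gt0; exists (@prism_labeling m n); split.
  exact: prism_edge_labeling.
move=> [i j] [i' j']; rewrite !vsum_prism_labeling //.
move/(vertex_sum_inj n_gt0 (ltn_ord i) (ltn_ord i') (leq_ord j) (leq_ord j')).
by case=> /ord_inj -> /ord_inj ->.
Qed.
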